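(* Let $(A,\triangleright,\triangleleft,\alpha)$ be a Hom-$L$-dendriform algebra. Define $x\triangleright^t y:=x\triangleright y$ and $x\triangleleft^t y:=-y\triangleleft x$. Then $(A,\triangleright^t,\triangleleft^t,\alpha)$ is a Hom-$L$-dendriform algebra. Moreover, writing $x\cdot y=x\triangleright y+x\triangleleft y$, $x\ast y=x\triangleright y-y\triangleleft x$ and $\cdot^t,\ast^t$ for the analogous operations built from $\triangleright^t,\triangleleft^t$, one has $\cdot^t=\ast$ and $\ast^t=\cdot$.
   Context: A Hom-$L$-dendriform algebra is a vector space $A$ with bilinear maps $\triangleleft,\triangleright:A\otimes A\to A$ and a linear map $\alpha:A\to A$ such that for all $x,y,z\in A$: $\alpha(x)\triangleright(y\triangleright z)=(x\triangleright y)\triangleright\alpha(z)+(x\triangleleft y)\triangleright\alpha(z)+\alpha(y)\triangleright(x\triangleright z)-(y\triangleleft x)\triangleright\alpha(z)-(y\triangleright x)\triangleright\alpha(z)$ and $\alpha(x)\triangleright(y\triangleleft z)=(x\triangleright y)\triangleleft\alpha(z)+\alpha(y)\triangleleft(x\triangleright z)+\alpha(y)\triangleleft(x\triangleleft z)-(y\triangleleft x)\triangleleft\alpha(z)$. *)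

From mathcomp Require Import all_boot all_algebra.
Set Implicit Arguments. Unset Strict Implicit. Unset Printing Implicit Defensive.
Import GRing.Theory.
Local Open Scope ring_scope.

Definition bilinear_map (K : fieldType) (V : lmodType K) (m : V -> V -> V) : Prop :=
  (forall y, linear (fun x => m x y)) /\ (forall x, linear (m x)).

Definition is_HomLDendriform (K : fieldType) (V : lmodType K)
  (gt lt : V -> V -> V) (alpha : V -> V) : Prop :=
  [/\ bilinear_map gt, bilinear_map lt, linear alpha,
   (forall x y z,
      gt (alpha x) (gt y z) =
        gt (gt x y) (alpha z) + gt (lt x y) (alpha z) + gt (alpha y) (gt x z)
        - gt (lt y x) (alpha z) - gt (gt y x) (alpha z)) &
   (forall x y z,
      gt (alpha x) (lt y z) =
        lt (gt x y) (alpha z) + lt (alpha y) (gt x z) + lt (alpha y) (lt x z)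
        - lt (lt y x) (alpha z))].

Definition gt_t (K : fieldType) (V : lmodType K) (gt : V -> V -> V) : V -> V -> V :=
  fun x y => gt x y.
Definition lt_t (K : fieldType) (V : lmodType K) (lt : V -> V -> V) : V -> V -> V :=
  fun x y => - lt y x.

Definition dot_op (K : fieldType) (V : lmodType K) (gt lt : V -> V -> V) : V -> V -> V :=
  fun x y => gt x y + lt x y.
Definition ast_op (K : fieldType) (V : lmodType K) (gt lt : V -> V -> V) : V -> V -> V :=
  fun x y => gt x y - lt y x.

(* Both claims are sign bookkeeping.  Bilinear maps commute with negation, so
   after replacing x <|^t y by - y <| x each Hom-L-dendriform identity for the
   transposed pair becomes, up to an overall sign and a permutation of the
   summands, the corresponding identity for the original pair (the second one
   with y and z exchanged).  The product x .^t y = x |> y - y <| x is x * y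
   verbatim, and x *^t y = x |> y + x <| y is x . y. *)
From mathcomp Require Import all_boot all_algebra.
From Stdlib Require Import FunctionalExtensionality.
Set Implicit Arguments. Unset Strict Implicit. Unset Printing Implicit Defensive.
Import GRing.Theory.
Local Open Scope ring_scope.

Lemma linear_morphN (R : pzRingType) (U W : lmodType R) (f : U -> W) :
  linear f -> {morph f : u / - u}.
Proof.
move=> lin_f u.
have f0 : f 0 = 0 by rewrite -(addNr u) -scaleN1r lin_f scaleN1r addNr.
by rewrite -[- u]addr0 -scaleN1r lin_f scaleN1r f0 addr0.
Qed.

Section Bilinear.
Variables (K : fieldType) (V : lmodType K) (m : V -> V -> V).
Hypothesis bil_m : bilinear_map m.

Lemma bilinear_oppl x y : m (- x) y = - m x y.
Proof. exact: (linear_morphN (bil_m.1 y)). Qed.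

Lemma bilinear_morphN x y : m x (- y) = - m x y.
Proof. exact: (linear_morphN (bil_m.2 x)). Qed.

Lemma bilinear_lt_t : bilinear_map (lt_t m).
Proof.
split=> [x | y] a u v; rewrite /lt_t scalerN -opprD.
- by rewrite (bil_m.2 x).
- by rewrite (bil_m.1 y).
Qed.

End Bilinear.

Section Transpose.
Variables (K : fieldType) (V : lmodType K) (gt lt : V -> V -> V) (alpha : V -> V).
Hypothesis dendA : is_HomLDendriform gt lt alpha.

Lemma HomLDendriform_gt_gt_t x y z :
  gt_t gt (alpha x) (gt_t gt y z) =
    gt_t gt (gt_t gt x y) (alpha z) + gt_t gt (lt_t lt x y) (alpha z)
    + gt_t gt (alpha y) (gt_t gt x z) - gt_t gt (lt_t lt y x) (alpha z)
    - gt_t gt (gt_t gt y x) (alpha z).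
Proof.
case: dendA => bil_gt _ _ gt_gt _.
rewrite /gt_t /lt_t !(bilinear_oppl bil_gt) gt_gt opprK; congr (_ - _).
by rewrite [LHS]addrAC [X in X + _ = _]addrAC [RHS]addrAC.
Qed.

Lemma HomLDendriform_gt_lt_t x y z :
  gt_t gt (alpha x) (lt_t lt y z) =
    lt_t lt (gt_t gt x y) (alpha z) + lt_t lt (alpha y) (gt_t gt x z)
    + lt_t lt (alpha y) (lt_t lt x z) - lt_t lt (lt_t lt y x) (alpha z).
Proof.
case: dendA => bil_gt bil_lt _ _ gt_lt; rewrite /gt_t /lt_t.
rewrite (bilinear_morphN bil_gt) gt_lt (bilinear_oppl bil_lt) (bilinear_morphN bil_lt).
by rewrite !opprD !opprK addrAC [- lt (gt x z) _ + _]addrC.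
Qed.

Lemma HomLDendriform_transpose : is_HomLDendriform (gt_t gt) (lt_t lt) alpha.
Proof.
case: (dendA) => bil_gt bil_lt lin_alpha _ _; split=> //.
- exact: bilinear_lt_t.
- exact: HomLDendriform_gt_gt_t.
- exact: HomLDendriform_gt_lt_t.
Qed.

End Transpose.

Lemma dot_op_transpose (K : fieldType) (V : lmodType K) (gt lt : V -> V -> V) :
  dot_op (gt_t gt) (lt_t lt) = ast_op gt lt.
Proof. by []. Qed.

Lemma ast_op_transpose (K : fieldType) (V : lmodType K) (gt lt : V -> V -> V) :
  ast_op (gt_t gt) (lt_t lt) = dot_op gt lt.
Proof.
apply: functional_extensionality => x; apply: functional_extensionality => y.
by rewrite /ast_op /dot_op /gt_t /lt_t opprK.
Qed.

Theorem mainTheorem13 (K : fieldType) (V : lmodType K)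
  (gt lt : V -> V -> V) (alpha : V -> V) :
  is_HomLDendriform gt lt alpha ->
  is_HomLDendriform (gt_t gt) (lt_t lt) alpha /\
  dot_op (gt_t gt) (lt_t lt) = ast_op gt lt /\
  ast_op (gt_t gt) (lt_t lt) = dot_op gt lt.
Proof.
move=> dendA; split; first exact: HomLDendriform_transpose.
by split; [exact: dot_op_transpose | exact: ast_op_transpose].
Qed.
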